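(* Let $\xi:[0,\ell)\to\mathbb{R}^n$ be a self-contracted curve and $\tau\in[0,\ell)$. Let $$\Delta:=\Big\{\tfrac{\xi(t)-\xi(\tau)}{\|\xi(t)-\xi(\tau)\|}\ :\ t\in(\tau,\ell),\ \xi(t)\ne\xi(\tau)\Big\}\subset\mathbb{S}^{n-1},$$ and let $\bar v_\tau\in\mathbb{S}^{n-1}$ be any vector with $\angle(\bar v_\tau,w)\le\theta_n$ for all $w\in\Delta$, where $\theta_n=\arccos((2\cdot3^n)^{-1})$ (such a vector exists). Put $\varepsilon_n:=(\cos\theta_n)/3=(2\cdot3^{n+1})^{-1}$. Then for every $T\in(\tau,\ell)$ and every $v\in\mathbb{S}^{n-1}$ with $\|v-\bar v_\tau\|\le\varepsilon_n$, $$\big|\Pi_v(\Xi(T))\big|\le\big|\Pi_v(\Xi(\tau))\big|-\varepsilon_n\|\xi(T)-\xi(\tau)\|$$ (with the convention that the inequality is trivially true if $|\Pi_v(\Xi(\tau))|=\infty$).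
   Context: Let $(X,d)$ be a metric space and $\ell\in(0,\infty]$. A map $\xi:[0,\ell)\to X$ (not necessarily continuous) is called self-contracted if $d(\xi(t_2),\xi(t_3))\le d(\xi(t_1),\xi(t_3))$ for all $0\le t_1\le t_2\le t_3<\ell$. For $t\in[0,\ell)$, $\Xi(t):=\xi([t,\ell))$. Here $X=\mathbb{R}^n$ with Euclidean norm $\|\cdot\|$, inner product $\langle\cdot,\cdot\rangle$; $\mathbb{S}^{n-1}$ is the unit sphere and $\angle$ the Euclidean angle. For $v\in\mathbb{S}^{n-1}$ and $\Omega\subset\mathbb{R}^n$, $\Pi_v(\Omega)\subset\mathbb{R}$ is the closed convex hull (smallest closed interval) containing $\{\langle x,v\rangle: x\in\Omega\}$, and $|\cdot|$ denotes one-dimensional Lebesgue measure. *)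

From Stdlib Require Import Reals Lra.
Open Scope R_scope.

(* Points of R^n are represented as functions nat -> R, of which only the
   coordinates 0..n-1 are relevant. *)
Definition vec := nat -> R.

Fixpoint rsum (n : nat) (f : nat -> R) : R :=
  match n with O => 0 | S m => rsum m f + f m end.

Definition inner (n : nat) (x y : vec) : R := rsum n (fun i => x i * y i).
Definition vnorm (n : nat) (x : vec) : R := sqrt (inner n x x).
Definition vsub (x y : vec) : vec := fun i => x i - y i.
Definition vscale (c : R) (x : vec) : vec := fun i => c * x i.

Definition vec_eq (n : nat) (x y : vec) : Prop := forall i, (i < n)%nat -> x i = y i.

Definition unit_sphere (n : nat) (v : vec) : Prop := vnorm n v = 1.

Definition angle (n : nat) (v w : vec) : R := acos (inner n v w / (vnorm n v * vnorm n w)).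

(* The parameter ell in (0, +oo]: None stands for +oo. *)
Definition in_dom (ell : option R) (t : R) : Prop :=
  0 <= t /\ match ell with Some l => t < l | None => True end.

Definition self_contracted (n : nat) (ell : option R) (xi : R -> vec) : Prop :=
  forall t1 t2 t3, in_dom ell t1 -> in_dom ell t3 -> t1 <= t2 -> t2 <= t3 ->
    vnorm n (vsub (xi t2) (xi t3)) <= vnorm n (vsub (xi t1) (xi t3)).

Definition Xi (ell : option R) (xi : R -> vec) (t : R) : vec -> Prop :=
  fun x => exists s, t <= s /\ in_dom ell s /\ x = xi s.

Definition DeltaSet (n : nat) (ell : option R) (xi : R -> vec) (tau : R) : vec -> Prop :=
  fun w => exists t, tau < t /\ in_dom ell t /\ ~ vec_eq n (xi t) (xi tau) /\
    w = vscale (/ vnorm n (vsub (xi t) (xi tau))) (vsub (xi t) (xi tau)).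

Definition theta (n : nat) : R := acos (/ (2 * 3 ^ n)).
Definition eps (n : nat) : R := cos (theta n) / 3.

Definition proj_set (n : nat) (v : vec) (Omega : vec -> Prop) : R -> Prop :=
  fun r => exists x, Omega x /\ r = inner n x v.

Definition is_glb (E : R -> Prop) (m : R) : Prop :=
  (forall x, E x -> m <= x) /\ (forall b, (forall x, E x -> b <= x) -> b <= m).

(* proj_length n v Omega L : the closed convex hull Pi_v(Omega) of the
   projections is a bounded interval [inf, sup] of Lebesgue measure L
   (finite). If Pi_v(Omega) is unbounded (measure +oo), no L satisfies it. *)
Definition proj_length (n : nat) (v : vec) (Omega : vec -> Prop) (L : R) : Prop :=
  exists s i, is_lub (proj_set n v Omega) s /\ is_glb (proj_set n v Omega) i /\ L = s - i.

(* Every chord [xi s - xi tau] with [s > tau] makes an angle at most [theta_n]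
   with [vbar], i.e. [<xi s - xi tau, vbar> >= 3 eps |xi s - xi tau|]; since
   [|v - vbar| <= eps], the projection onto [v] still advances by at least
   [2 eps |xi s - xi tau|].  For [s >= T], self-contractedness gives
   [|xi T - xi tau| <= |xi T - xi s| + |xi s - xi tau| <= 2 |xi s - xi tau|],
   so every point of [Xi(T)] projects at least [eps |xi T - xi tau|] above the
   projection of [xi tau], a point of [Xi(tau)].  As [Xi(T)] is contained in
   [Xi(tau)], the interval [Pi_v(Xi(T))] has the same or a smaller upper end and
   a lower end raised by that amount. *)

From Stdlib Require Import Reals Lra Psatz.
Open Scope R_scope.

Lemma Rabs_le_inv (x b : R) : Rabs x <= b -> - b <= x <= b.
Proof.
  intros H; pose proof (Rle_abs x); pose proof (Rle_abs (- x)).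
  rewrite Rabs_Ropp in *; lra.
Qed.

Lemma acos_le_inv (x y : R) :
  -1 <= x <= 1 -> -1 <= y <= 1 -> acos x <= acos y -> y <= x.
Proof.
  intros Hx Hy Hxy.
  rewrite <- (cos_acos x), <- (cos_acos y) by assumption.
  pose proof (acos_bound x); pose proof (acos_bound y).
  apply cos_decr_1; lra.
Qed.

Lemma rsum_ext (n : nat) (f g : nat -> R) :
  (forall i, (i < n)%nat -> f i = g i) -> rsum n f = rsum n g.
Proof.
  induction n as [|m IH]; simpl; intros Hfg; [reflexivity|].
  rewrite IH by (intros; apply Hfg; lia).
  rewrite Hfg by lia; reflexivity.
Qed.

Lemma rsum_add (n : nat) (f g : nat -> R) : rsum n (fun i => f i + g i) = rsum n f + rsum n g.
Proof. induction n as [|m IH]; simpl; [lra|]. rewrite IH; lra. Qed.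

Lemma rsum_scal (n : nat) (c : R) (f : nat -> R) : rsum n (fun i => c * f i) = c * rsum n f.
Proof. induction n as [|m IH]; simpl; [lra|]. rewrite IH; lra. Qed.

Lemma rsum_nonneg (n : nat) (f : nat -> R) :
  (forall i, (i < n)%nat -> 0 <= f i) -> 0 <= rsum n f.
Proof.
  induction n as [|m IH]; simpl; intros Hf; [lra|].
  assert (0 <= rsum m f) by (apply IH; intros; apply Hf; lia).
  assert (0 <= f m) by (apply Hf; lia).
  lra.
Qed.

Lemma inner_self_eq0 (n : nat) (x : vec) : inner n x x = 0 -> forall i, (i < n)%nat -> x i = 0.
Proof.
  unfold inner; induction n as [|m IH]; simpl; intros Hx i Hi; [lia|].
  assert (0 <= rsum m (fun i => x i * x i)) by (apply rsum_nonneg; intros; nra).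
  assert (x m * x m = 0) by nra.
  destruct (Nat.eq_dec i m) as [->|Him]; [nra|].
  apply IH; [nra|lia].
Qed.

Section Euclidean.

Variable n : nat.

Lemma inner_sym (x y : vec) : inner n x y = inner n y x.
Proof. apply (rsum_ext n); intros; lra. Qed.

Lemma inner_self_nonneg (x : vec) : 0 <= inner n x x.
Proof. apply (rsum_nonneg n); intros; nra. Qed.

Lemma inner_lincomb_l (a b : R) (x y z : vec) :
  (forall i, (i < n)%nat -> z i = a * x i + b * y i) ->
  forall w, inner n z w = a * inner n x w + b * inner n y w.
Proof.
  intros Hz w; unfold inner.
  rewrite <- !(rsum_scal n), <- (rsum_add n).
  apply (rsum_ext n); intros i Hi; rewrite Hz by exact Hi; lra.
Qed.

Lemma inner_vsub_l (x y w : vec) : inner n (vsub x y) w = inner n x w - inner n y w.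
Proof.
  rewrite (inner_lincomb_l 1 (-1) x y); [lra|].
  intros; unfold vsub; lra.
Qed.

Lemma inner_vsub_r (w x y : vec) : inner n w (vsub x y) = inner n w x - inner n w y.
Proof. rewrite !(inner_sym w); apply inner_vsub_l. Qed.

Lemma inner_vscale_l (c : R) (x w : vec) : inner n (vscale c x) w = c * inner n x w.
Proof.
  rewrite (inner_lincomb_l c 0 x x); [lra|].
  intros; unfold vscale; lra.
Qed.

Lemma inner_eq0_l (x y : vec) : (forall i, (i < n)%nat -> x i = 0) -> inner n x y = 0.
Proof.
  intros Hx; rewrite (inner_lincomb_l 0 0 x x); [lra|].
  intros i Hi; rewrite Hx by exact Hi; lra.
Qed.

(* The discriminant argument: [<a x - b y, a x - b y> >= 0] with [a = <y,y>]
   and [b = <x,y>]. *)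
Lemma cauchy_schwarz_sqr (x y : vec) :
  inner n x y ^ 2 <= inner n x x * inner n y y.
Proof.
  set (a := inner n y y); set (b := inner n x y).
  assert (Ha : 0 <= a) by apply inner_self_nonneg.
  assert (Hx : 0 <= inner n x x) by apply inner_self_nonneg.
  destruct (Req_dec a 0) as [Ha0|Ha0].
  - assert (Hb : b = 0).
    { unfold b; rewrite inner_sym; apply inner_eq0_l, (inner_self_eq0 n), Ha0. }
    rewrite Hb, Ha0; nra.
  - set (z := fun i => a * x i + (- b) * y i).
    assert (Hz : 0 <= inner n z z) by apply inner_self_nonneg.
    assert (Ez : forall w, inner n z w = a * inner n x w + (- b) * inner n y w)
      by (apply inner_lincomb_l; reflexivity).
    rewrite Ez, (inner_sym x z), (inner_sym y z), !Ez, (inner_sym y x) in Hz.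
    fold a b in Hz.
    nra.
Qed.

Lemma vnorm_nonneg (x : vec) : 0 <= vnorm n x.
Proof. apply sqrt_pos. Qed.

Lemma vnorm_mul_self (x : vec) : vnorm n x * vnorm n x = inner n x x.
Proof. apply sqrt_sqrt, inner_self_nonneg. Qed.

Lemma cauchy_schwarz (x y : vec) : Rabs (inner n x y) <= vnorm n x * vnorm n y.
Proof.
  pose proof (cauchy_schwarz_sqr x y).
  pose proof (vnorm_mul_self x); pose proof (vnorm_mul_self y).
  pose proof (vnorm_nonneg x); pose proof (vnorm_nonneg y).
  apply Rsqr_incr_0_var; [|nra].
  rewrite <- Rsqr_abs; unfold Rsqr; nra.
Qed.

Lemma vnorm_vsub_vec_eq (x y : vec) : vec_eq n x y -> vnorm n (vsub x y) = 0.
Proof.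
  intros Hxy; unfold vnorm; rewrite inner_eq0_l, sqrt_0; [reflexivity|].
  intros i Hi; unfold vsub; rewrite Hxy by exact Hi; lra.
Qed.

Lemma vnorm_vscale (c : R) (x : vec) : vnorm n (vscale c x) = Rabs c * vnorm n x.
Proof.
  unfold vnorm.
  rewrite inner_vscale_l, inner_sym, inner_vscale_l.
  replace (c * (c * inner n x x)) with (Rsqr c * inner n x x) by (unfold Rsqr; lra).
  rewrite sqrt_mult_alt by apply Rle_0_sqr.
  rewrite sqrt_Rsqr_abs; reflexivity.
Qed.

Lemma vnorm_vsub_sym (x y : vec) : vnorm n (vsub x y) = vnorm n (vsub y x).
Proof.
  unfold vnorm; f_equal.
  rewrite !inner_vsub_l, !inner_vsub_r, (inner_sym x y).
  lra.
Qed.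

Lemma vnorm_vsub_triangle (x y z : vec) :
  vnorm n (vsub x z) <= vnorm n (vsub x y) + vnorm n (vsub y z).
Proof.
  set (p := vsub x y); set (q := vsub y z).
  assert (E : forall w, inner n (vsub x z) w = 1 * inner n p w + 1 * inner n q w)
    by (apply inner_lincomb_l; intros; unfold p, q, vsub; lra).
  assert (Exz : inner n (vsub x z) (vsub x z) = inner n p p + 2 * inner n p q + inner n q q).
  { rewrite E, (inner_sym p), (inner_sym q), !E, (inner_sym q p); lra. }
  pose proof (Rle_abs (inner n p q)); pose proof (cauchy_schwarz p q).
  pose proof (vnorm_mul_self p); pose proof (vnorm_mul_self q).
  pose proof (vnorm_mul_self (vsub x z)).
  pose proof (vnorm_nonneg p); pose proof (vnorm_nonneg q).
  pose proof (vnorm_nonneg (vsub x z)).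
  apply Rsqr_incr_0_var; unfold Rsqr; nra.
Qed.

Lemma inner_ge_of_angle_le (u a : vec) (c : R) :
  unit_sphere n u -> 0 < vnorm n a -> -1 <= c <= 1 ->
  angle n u (vscale (/ vnorm n a) a) <= acos c ->
  c * vnorm n a <= inner n a u.
Proof.
  intros Hu Ha Hc Hangle.
  set (w := vscale (/ vnorm n a) a) in Hangle.
  assert (Hinv : 0 < / vnorm n a) by (apply Rinv_0_lt_compat, Ha).
  assert (Hw : vnorm n w = 1).
  { unfold w; rewrite vnorm_vscale, Rabs_pos_eq by lra; field; lra. }
  assert (Huw : inner n u w = / vnorm n a * inner n a u).
  { unfold w; rewrite inner_sym, inner_vscale_l; reflexivity. }
  assert (Hrange : -1 <= inner n u w <= 1).
  { apply Rabs_le_inv.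
    pose proof (cauchy_schwarz u w) as Hcs; rewrite Hu, Hw in Hcs; lra. }
  unfold angle in Hangle; rewrite Hu, Hw, Rmult_1_l, Rdiv_1_r in Hangle.
  apply acos_le_inv in Hangle; [|exact Hrange|exact Hc].
  rewrite Huw in Hangle.
  apply Rmult_le_compat_l with (r := vnorm n a) in Hangle; [|lra].
  rewrite <- Rmult_assoc, Rinv_r in Hangle by lra.
  lra.
Qed.

Lemma inner_ge_of_vnorm_vsub_le (u v a : vec) (c e : R) :
  vnorm n (vsub v u) <= e -> c * vnorm n a <= inner n a u ->
  (c - e) * vnorm n a <= inner n a v.
Proof.
  intros Hvu Hau.
  assert (Hsplit : inner n a v = inner n a u + inner n (vsub v u) a).
  { rewrite inner_vsub_l, !(inner_sym a); lra. }
  pose proof (Rabs_le_inv _ _ (cauchy_schwarz (vsub v u) a)).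
  assert (vnorm n (vsub v u) * vnorm n a <= e * vnorm n a)
    by (apply Rmult_le_compat_r; [apply vnorm_nonneg|exact Hvu]).
  lra.
Qed.

End Euclidean.

Lemma cos_theta_pos (n : nat) : 0 < cos (theta n).
Proof.
  assert (H3 : 1 <= 3 ^ n) by (apply pow_R1_Rle; lra).
  assert (Hpos : 0 < / (2 * 3 ^ n)) by (apply Rinv_0_lt_compat; lra).
  assert (Hle : / (2 * 3 ^ n) <= 1).
  { rewrite <- Rinv_1; apply Rinv_le_contravar; lra. }
  unfold theta; rewrite cos_acos by lra; exact Hpos.
Qed.

Lemma theta_acos_cos (n : nat) : theta n = acos (cos (theta n)).
Proof. symmetry; apply acos_cos, acos_bound. Qed.

Lemma self_contracted_chord_le (n : nat) (ell : option R) (xi : R -> vec) (tau T s : R) :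
  self_contracted n ell xi -> in_dom ell tau -> in_dom ell s -> tau <= T <= s ->
  vnorm n (vsub (xi T) (xi tau)) <= 2 * vnorm n (vsub (xi s) (xi tau)).
Proof.
  intros Hsc Htau Hs HT.
  pose proof (vnorm_vsub_triangle n (xi T) (xi s) (xi tau)).
  assert (vnorm n (vsub (xi T) (xi s)) <= vnorm n (vsub (xi tau) (xi s)))
    by (apply Hsc; auto; lra).
  rewrite (vnorm_vsub_sym n (xi tau)) in *.
  lra.
Qed.

Lemma proj_length_le_sub (n : nat) (v : vec) (Omega0 Omega1 : vec -> Prop)
    (p : vec) (delta L0 L1 : R) :
  proj_length n v Omega0 L0 -> proj_length n v Omega1 L1 ->
  (forall x, Omega1 x -> Omega0 x) -> Omega0 p ->
  (forall x, Omega1 x -> inner n p v + delta <= inner n x v) ->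
  L1 <= L0 - delta.
Proof.
  intros [s0 [i0 [Hs0 [Hi0 ->]]]] [s1 [i1 [Hs1 [Hi1 ->]]]] Hsub Hp Hgap.
  assert (s1 <= s0).
  { apply Hs1; intros r [x [Hx ->]]; apply Hs0; exists x; auto. }
  assert (i0 <= inner n p v) by (apply Hi0; exists p; auto).
  assert (inner n p v + delta <= i1).
  { apply Hi1; intros r [x [Hx ->]]; auto. }
  lra.
Qed.

Section ConeCondition.

Variables (n : nat) (ell : option R) (xi : R -> vec) (tau : R) (vbar v : vec).
Hypothesis vbar_unit : unit_sphere n vbar.
Hypothesis chords_in_cone :
  forall w, DeltaSet n ell xi tau w -> angle n vbar w <= theta n.
Hypothesis v_near_vbar : vnorm n (vsub v vbar) <= eps n.

Lemma chord_proj_ge (s : R) : tau < s -> in_dom ell s ->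
  2 * eps n * vnorm n (vsub (xi s) (xi tau)) <= inner n (vsub (xi s) (xi tau)) v.
Proof.
  intros Hs Hdom.
  set (a := vsub (xi s) (xi tau)).
  pose proof (cos_theta_pos n) as Hcos.
  destruct (vnorm_nonneg n a) as [Ha|Ha].
  - assert (Hdelta : DeltaSet n ell xi tau (vscale (/ vnorm n a) a)).
    { exists s; repeat split; try apply Hdom; try lra.
      intros Heq; apply vnorm_vsub_vec_eq in Heq; fold a in Heq; lra. }
    assert (Hvbar : cos (theta n) * vnorm n a <= inner n a vbar).
    { apply inner_ge_of_angle_le; [exact vbar_unit|exact Ha| |].
      - pose proof (COS_bound (theta n)); lra.
      - rewrite <- theta_acos_cos; apply chords_in_cone, Hdelta. }
    pose proof (inner_ge_of_vnorm_vsub_le n vbar v a _ _ v_near_vbar Hvbar).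
    unfold eps in *; lra.
  - pose proof (Rabs_le_inv _ _ (cauchy_schwarz n a v)).
    rewrite <- Ha in *; lra.
Qed.

Lemma Xi_proj_ge (self_contr : self_contracted n ell xi) (tau_dom : in_dom ell tau)
    (T : R) : tau < T -> forall x, Xi ell xi T x ->
  inner n (xi tau) v + eps n * vnorm n (vsub (xi T) (xi tau)) <= inner n x v.
Proof.
  intros HT x [s [HTs [Hs ->]]].
  pose proof (chord_proj_ge s ltac:(lra) Hs).
  pose proof (self_contracted_chord_le n ell xi tau T s self_contr tau_dom Hs ltac:(lra)).
  assert (0 < eps n) by (unfold eps; pose proof (cos_theta_pos n); lra).
  rewrite inner_vsub_l in *.
  nra.
Qed.

End ConeCondition.

Theorem mainTheorem4 (n : nat) (ell : option R) (xi : R -> vec) (tau : R) (vbar : vec) :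
  match ell with Some l => 0 < l | None => True end ->
  self_contracted n ell xi ->
  in_dom ell tau ->
  unit_sphere n vbar ->
  (forall w, DeltaSet n ell xi tau w -> angle n vbar w <= theta n) ->
  forall (T : R) (v : vec),
    tau < T -> in_dom ell T ->
    unit_sphere n v ->
    vnorm n (vsub v vbar) <= eps n ->
    forall L0 L1,
      proj_length n v (Xi ell xi tau) L0 ->
      proj_length n v (Xi ell xi T) L1 ->
      L1 <= L0 - eps n * vnorm n (vsub (xi T) (xi tau)).
Proof.
  intros _ Hsc Htau Hvbar Hcone T v HT _ _ Hv L0 L1 HL0 HL1.
  apply (proj_length_le_sub n v (Xi ell xi tau) (Xi ell xi T) (xi tau) _ _ _ HL0 HL1).
  - intros x [s [HTs [Hs ->]]]; exists s; split; [lra|split; [exact Hs|reflexivity]].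
  - exists tau; split; [lra|split; [exact Htau|reflexivity]].
  - exact (Xi_proj_ge n ell xi tau vbar v Hvbar Hcone Hv Hsc Htau T HT).
Qed.
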